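(* In the group $C$, if $i,j,k$ are three distinct edges of $T$ with a common endpoint, then $u_i$ commutes with $u_ju_ku_j$. Consequently, $C$ is a quotient of the group $Y(T)$, defined as the group generated by one involution per edge of $T$ subject to relations of the forms (R1)–(R3) and these commutation relations.
   Context: Let $T$ be the graph with vertex set $\{1,\dots,18\}$ and 27 edges labelled $1,\dots,27$. Edge $j$ joins the two vertices listed after it: 1:$\{2,7\}$, 2:$\{1,13\}$, 3:$\{4,9\}$, 4:$\{1,3\}$, 5:$\{1,5\}$, 6:$\{2,3\}$, 7:$\{2,6\}$, 8:$\{3,10\}$, 9:$\{4,6\}$, 10:$\{4,5\}$, 11:$\{5,8\}$, 12:$\{6,14\}$, 13:$\{7,15\}$, 14:$\{7,11\}$, 15:$\{8,12\}$, 16:$\{8,16\}$, 17:$\{9,11\}$, 18:$\{9,17\}$, 19:$\{10,12\}$, 20:$\{10,18\}$, 21:$\{11,12\}$, 22:$\{13,15\}$, 23:$\{13,17\}$, 24:$\{14,18\}$, 25:$\{14,16\}$, 26:$\{15,16\}$, 27:$\{17,18\}$. Nine hexagons in $T$ are given by ordered 6-tuples of edges $(a_r,b_r,c_r,d_r,e_r,f_r)$, $r=1,\dots,9$: $V_1$: $(2,4,6,1,13,22)$; $V_2$: $(1,7,9,3,17,14)$; $V_3$: $(3,10,5,2,23,18)$; $V_4$: $(11,15,19,8,4,5)$; $V_5$: $(8,20,24,12,7,6)$; $V_6$: $(12,25,16,11,10,9)$; $V_7$: $(26,13,14,21,15,16)$; $V_8$: $(21,17,18,27,20,19)$; $V_9$: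 $(27,23,22,26,25,24)$. The group $C$ is generated by $u_1,\dots,u_{27}$ with the relations: (R1) $u_j^2=1$ for all $j$; (R2) $u_iu_j=u_ju_i$ whenever edges $i$ and $j$ have no common endpoint; (R3) $u_iu_ju_i=u_ju_iu_j$ whenever $i\neq j$ and edges $i,j$ share an endpoint; (R4) for each $r=1,\dots,9$: $u_{a_r}u_{b_r}u_{c_r}u_{d_r}u_{e_r}=u_{b_r}u_{c_r}u_{d_r}u_{e_r}u_{f_r}$. *)

(* The group C (and Y(T)) are given by presentations whose
   generators are involutions; hence they coincide with the monoids presented
   by the same relations on words over the generators.  We encode a presented
   group by the congruence it induces on words. *)
From mathcomp Require Import all_boot.
Set Implicit Arguments. Unset Strict Implicit. Unset Printing Implicit Defensive.

(* Edge j (1 <= j <= 27) of T is the (j-1)-th entry of this list. *)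
Definition ends_list : seq (nat * nat) :=
  [:: (2,7); (1,13); (4,9); (1,3); (1,5); (2,3); (2,6); (3,10); (4,6);
      (4,5); (5,8); (6,14); (7,15); (7,11); (8,12); (8,16); (9,11); (9,17);
      (10,12); (10,18); (11,12); (13,15); (13,17); (14,18); (14,16);
      (15,16); (17,18)].

Definition gen := 'I_27.
Definition lab (e : gen) : nat := (nat_of_ord e).+1.
Definition g (j : nat) : gen := inord j.-1.

Definition ends (e : gen) : nat * nat := nth (0, 0) ends_list e.
Definition incident (v : nat) (e : gen) : bool := (v == (ends e).1) || (v == (ends e).2).
Definition share (e f : gen) : bool :=
  incident (ends e).1 f || incident (ends e).2 f.

Definition hexagons : seq (seq nat) :=
  [:: [:: 2;4;6;1;13;22]; [:: 1;7;9;3;17;14]; [:: 3;10;5;2;23;18];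
      [:: 11;15;19;8;4;5]; [:: 8;20;24;12;7;6]; [:: 12;25;16;11;10;9];
      [:: 26;13;14;21;15;16]; [:: 21;17;18;27;20;19]; [:: 27;23;22;26;25;24]].

Inductive coxrel : seq gen -> seq gen -> Prop :=
| R1 x : coxrel [:: x; x] [::]
| R2 x y : ~~ share x y -> coxrel [:: x; y] [:: y; x]
| R3 x y : x != y -> share x y -> coxrel [:: x; y; x] [:: y; x; y].

Inductive Crel : seq gen -> seq gen -> Prop :=
| C_cox l r : coxrel l r -> Crel l r
| C_hex a b c d e f :
    [:: a; b; c; d; e; f] \in hexagons ->
    Crel [:: g a; g b; g c; g d; g e] [:: g b; g c; g d; g e; g f].

Inductive Yrel : seq gen -> seq gen -> Prop :=
| Y_cox l r : coxrel l r -> Yrel l r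
| Y_comm i j k v : i != j -> j != k -> i != k ->
    incident v i -> incident v j -> incident v k ->
    Yrel [:: i; j; k; j] [:: j; k; j; i].

Inductive word_eq (R : seq gen -> seq gen -> Prop) : seq gen -> seq gen -> Prop :=
| we_rel l r : R l r -> word_eq R l r
| we_refl w : word_eq R w w
| we_sym w1 w2 : word_eq R w1 w2 -> word_eq R w2 w1
| we_trans w1 w2 w3 : word_eq R w1 w2 -> word_eq R w2 w3 -> word_eq R w1 w3
| we_ctx p q l r : word_eq R l r -> word_eq R (p ++ l ++ q) (p ++ r ++ q).

From mathcomp Require Import all_boot.
From Stdlib Require Import Setoid Morphisms.

(* Around a vertex of T with edges i, j, k, some hexagon (possibly rotated or
   reflected) contains i and j as consecutive edges while its four other edges
   y, x3, x4, x5 avoid k.  Its relation, rewritten with the involutions, reads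
   u_j = w^-1 u_i w with w = u_y u_x3 u_x4 u_x5.  As u_k commutes with w,
   u_j u_k u_j = w^-1 (u_i u_k u_i) w, and this commutes with u_i because u_i
   braids with u_y and commutes with u_x3 u_x4 u_x5.  Relations of rotated
   hexagons follow from (R1)-(R3) in the same way, and a suitable hexagon for
   each of the 108 ordered vertex triples is found by computation. *)

Set Implicit Arguments.
Unset Strict Implicit.
Unset Printing Implicit Defensive.

#[export] Hint Resolve we_refl : core.

Section WordCongruence.

Variable R : seq gen -> seq gen -> Prop.
Local Notation "u ~ v" := (word_eq R u v) (at level 70).

Lemma word_eq_cat u u' v v' : u ~ u' -> v ~ v' -> u ++ v ~ u' ++ v'.
Proof.
move=> Hu Hv; apply: (we_trans (we_ctx [::] v Hu)) => /=.
by have := we_ctx u' [::] Hv; rewrite !cats0.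
Qed.

#[export] Instance word_eq_Equivalence : Equivalence (word_eq R).
Proof. by split; [exact: we_refl | exact: we_sym | exact: we_trans]. Qed.

#[export] Instance cat_word_eq_Proper : Proper (word_eq R ==> word_eq R ==> word_eq R) cat.
Proof. by move=> u u' Hu v v' Hv; exact: word_eq_cat. Qed.

#[export] Instance cons_word_eq_Proper : Proper (eq ==> word_eq R ==> word_eq R) cons.
Proof. by move=> x _ <- u v; exact: (word_eq_cat (we_refl _ [:: x])). Qed.

Lemma commute_cons x y s : [:: x; y] ~ [:: y; x] -> x :: y :: s ~ y :: x :: s.
Proof. by move=> Hxy; exact: (word_eq_cat Hxy (we_refl _ s)). Qed.

Lemma braid_cons x y s : [:: x; y; x] ~ [:: y; x; y] -> x :: y :: x :: s ~ y :: x :: y :: s.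
Proof. by move=> Hxy; exact: (word_eq_cat Hxy (we_refl _ s)). Qed.

Lemma commute_word x w s :
  {in w, forall y, [:: x; y] ~ [:: y; x]} -> x :: w ++ s ~ w ++ x :: s.
Proof.
elim: w => [//|y w IHw] Hw /=.
rewrite (commute_cons _ (Hw y (mem_head y w))) IHw //.
by move=> z wz; apply: Hw; rewrite inE wz orbT.
Qed.

Hypothesis involutive : forall x, [:: x; x] ~ [::].

Lemma cancel_cons x s : x :: x :: s ~ s.
Proof. exact: (word_eq_cat (involutive x) (we_refl _ s)). Qed.

Lemma rev_cancel w s : rev w ++ w ++ s ~ s.
Proof.
elim: w s => [//|x w IHw] s /=.
by rewrite rev_cons -cats1 -catA /= cancel_cons IHw.
Qed.

Lemma cancel_rev w s : w ++ rev w ++ s ~ s.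
Proof. by have := rev_cancel (rev w) s; rewrite revK. Qed.

Lemma conjugate_of_shift a f w : a :: w ~ rcons w f -> [:: f] ~ rev w ++ a :: w.
Proof. by move=> Hshift; rewrite -[[:: f]](rev_cancel w) cats1 Hshift. Qed.

Lemma shift_rev a w f : a :: w ~ rcons w f -> f :: rev w ~ rcons (rev w) a.
Proof.
move=> Hshift; rewrite -cat1s (conjugate_of_shift Hshift) -catA /=.
by rewrite -[w ++ rev w]cats0 -catA cancel_rev cats1.
Qed.

Lemma shift_rot a b v f :
    [:: a; b; a] ~ [:: b; a; b] -> {in v, forall y, [:: a; y] ~ [:: y; a]} ->
  a :: b :: v ~ rcons (b :: v) f -> b :: rcons v f ~ rcons (rcons v f) a.
Proof.
move=> Hab Hav Hshift; have Hf := conjugate_of_shift Hshift.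
rewrite -!cats1 -catA -cat_cons [[:: f]]Hf cancel_rev rev_cons -cats1 -!catA cancel_rev /=.
by rewrite -(commute_word _ Hav) -(braid_cons _ Hab) cancel_cons cats0.
Qed.

Lemma commute_conjugate i y u k j :
    [:: i; y; i] ~ [:: y; i; y] -> {in u, forall z, [:: i; z] ~ [:: z; i]} ->
    {in y :: u, forall z, [:: k; z] ~ [:: z; k]} ->
  [:: j] ~ rev (y :: u) ++ i :: y :: u -> [:: i; j; k; j] ~ [:: j; k; j; i].
Proof.
move=> Hiy Hiu Hk Hj.
have Hjkj : [:: j; k; j] ~ rev (y :: u) ++ [:: i, k, i, y & u].
  rewrite -[[:: j; k; j]]/([:: j] ++ k :: [:: j]) [[:: j]]Hj.
  move: (y :: u) Hk => w Hk; rewrite -catA /=.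
  by rewrite -(commute_word _ Hk) cancel_rev.
have Hky := Hk y (mem_head y u).
have Hiu' : {in rev u, forall z, [:: i; z] ~ [:: z; i]}.
  by move=> z; rewrite mem_rev; exact: Hiu.
rewrite -[[:: i; j; k; j]]/(i :: [:: j; k; j]) -[[:: j; k; j; i]]/([:: j; k; j] ++ [:: i]).
rewrite Hjkj rev_cons -cats1 -!catA /= (commute_word _ Hiu') -(commute_word _ Hiu) cats0.
by rewrite (braid_cons _ Hiy) -(commute_cons _ Hky) -(braid_cons _ Hiy).
Qed.

End WordCongruence.

Lemma word_eq_sub (R R' : seq gen -> seq gen -> Prop) :
    (forall l r, R l r -> word_eq R' l r) ->
  forall u v, word_eq R u v -> word_eq R' u v.
Proof.
move=> HR u v; elim=> [l r /HR //|//|w1 w2 _|w1 w2 w3 _ H12 _|p q l r _].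
- exact: we_sym.
- exact: we_trans.
- exact: we_ctx.
Qed.

Section PresentationC.

Local Notation "u ~ v" := (word_eq Crel u v) (at level 70).

Lemma C_involutive x : [:: x; x] ~ [::].
Proof. exact/we_rel/C_cox/R1. Qed.

Lemma C_commute x y : ~~ share x y -> [:: x; y] ~ [:: y; x].
Proof. by move=> Hxy; apply/we_rel/C_cox/R2. Qed.

Lemma C_braid x y : x != y -> share x y -> [:: x; y; x] ~ [:: y; x; y].
Proof. by move=> Hxy Hs; apply/we_rel/C_cox/R3. Qed.

(* For s = [:: a; b; c; d; e; f] this is the hexagon relation (R4). *)
Definition shift_relation (s : seq gen) : Prop :=
  if s is a :: t then belast a t ~ t else True.

(* Required of all six rotations, this says that s is an induced hexagon. *)
Definition hexagon_shape (s : seq gen) : bool :=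
  if s is [:: a; b; c; d; e; _] then
    [&& a != b, share a b & all (fun x => ~~ share a x) [:: c; d; e]]
  else false.

Lemma hexagon_shape_size s : hexagon_shape s -> size s = 6.
Proof. by case: s => [|? [|? [|? [|? [|? [|? [|? ?]]]]]]]. Qed.

Lemma shift_relation_rev s : shift_relation s -> shift_relation (rev s).
Proof.
case: s => [|a t] //; case/lastP: t => [|w f] //=.
rewrite belast_rcons rev_cons rev_rcons /= belast_rcons.
exact: (shift_rev C_involutive).
Qed.

Lemma shift_relation_rot1 s :
  hexagon_shape s -> shift_relation s -> shift_relation (rot 1 s).
Proof.
case: s => [|a [|b [|c [|d [|e [|f [|? ?]]]]]]] // /and3P[Hab Hshare Hfar] Hshift.
apply: (shift_rot C_involutive (C_braid Hab Hshare) _ Hshift) => x /(allP Hfar).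
exact: C_commute.
Qed.

(* A copy of [g] that [vm_compute] can evaluate: [inord] is stuck on the
   opaque proof inside [insub]. *)
Definition gen_of (j : nat) : gen := Ordinal (ltn_pmod j.-1 (isT : 0 < 27)).

Lemma g_gen_of j : j.-1 < 27 -> g j = gen_of j.
Proof. by move=> Hj; apply: ord_inj; rewrite /= inordK // modn_small. Qed.

Definition gens : seq gen := [seq gen_of j | j <- iota 1 27].

Lemma mem_gens x : x \in gens.
Proof.
apply/mapP; exists x.+1; first by rewrite mem_iota /= add1n ltnS ltn_ord.
by apply: ord_inj; rewrite /= modn_small.
Qed.

Definition hexagon_words : seq (seq gen) := [seq map gen_of h | h <- hexagons].

Lemma shift_relation_hexagon_words s : s \in hexagon_words -> shift_relation s.
Proof.
case/mapP=> h Hh ->.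
have /allP/(_ h Hh)/andP[Hsize /allP Hrange] :
  all (fun h => (size h == 6) && all (fun j => j.-1 < 27) h) hexagons by [].
have -> : map gen_of h = map g h by apply/eq_in_map => j /Hrange /g_gen_of.
case: h Hh Hsize {Hrange} => [|a [|b [|c [|d [|e [|f [|? ?]]]]]]] // Hh _.
exact/we_rel/C_hex.
Qed.

Definition hexagon_forms : seq (seq gen) :=
  flatten [seq [seq rot n t | t <- [:: s; rev s], n <- iota 0 6] | s <- hexagon_words].

Lemma mem_hexagon_forms s t n :
  s \in hexagon_words -> t \in [:: s; rev s] -> n < 6 -> rot n t \in hexagon_forms.
Proof.
move=> Hs Ht Hn; apply/flattenP; exists [seq rot n t | t <- [:: s; rev s], n <- iota 0 6].
  exact: (map_f (fun s => [seq rot n t | t <- [:: s; rev s], n <- iota 0 6]) Hs).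
by apply: (allpairs_f (fun t n => rot n t)); rewrite // mem_iota.
Qed.

Lemma hexagon_forms_shape : all hexagon_shape hexagon_forms.
Proof. by vm_compute. Qed.

Lemma shift_relation_hexagon_forms s : s \in hexagon_forms -> shift_relation s.
Proof.
case/flattenP=> _ /mapP[s0 Hs0 ->] /allpairsP[[t n] [Ht Hn ->]].
move: Ht Hn; rewrite mem_iota /= => Ht.
elim: n => [|n IHn] Hn.
  rewrite rot0; move: Ht; rewrite !inE => /orP[]/eqP->.
    exact: shift_relation_hexagon_words.
  exact/shift_relation_rev/shift_relation_hexagon_words.
have Hshape := allP hexagon_forms_shape _ (mem_hexagon_forms Hs0 Ht (ltnW Hn)).
have Hsize : n < size t by rewrite -(size_rot n) (hexagon_shape_size Hshape) ltnW.
by rewrite rotS //; apply: shift_relation_rot1 => //; exact: IHn (ltnW Hn).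
Qed.

Definition conjugating_form (i j k : gen) (s : seq gen) : bool :=
  if s is [:: a; y; x3; x4; x5; b] then
    [&& a == i, b == j & all (fun z => ~~ share k z) [:: y; x3; x4; x5]]
  else false.

Lemma conjugating_form_commute i j k s :
  s \in hexagon_forms -> conjugating_form i j k s -> [:: i; j; k; j] ~ [:: j; k; j; i].
Proof.
move=> Hs; have Hshift := shift_relation_hexagon_forms Hs.
have := allP hexagon_forms_shape _ Hs.
case: s {Hs} Hshift => [|a [|y [|x3 [|x4 [|x5 [|b [|? ?]]]]]]] // Hshift.
case/and3P=> Hay Hshare Hfar /and3P[/eqP Ea /eqP Eb Hk]; subst a b.
apply: (commute_conjugate C_involutive (C_braid Hay Hshare)).
- by move=> z /(allP Hfar); exact: C_commute.
- by move=> z /(allP Hk); exact: C_commute.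
- exact: (conjugate_of_shift (w := [:: y; x3; x4; x5]) C_involutive Hshift).
Qed.

End PresentationC.

Definition common_end (i j k : gen) : bool :=
  has (fun v => incident v j && incident v k) [:: (ends i).1; (ends i).2].

Lemma common_endP v i j k :
  incident v i -> incident v j -> incident v k -> common_end i j k.
Proof. by case/orP=> /eqP-> Hj Hk; rewrite /common_end /= Hj Hk ?orbT. Qed.

(* [if] rather than [==>]: [vm_compute] would evaluate both arguments of [implb]. *)
Lemma triples_conjugating_form :
  all (fun i => all (fun j => all (fun k =>
    if [&& i != j, j != k, i != k & common_end i j k] then
      has (conjugating_form i j k) hexagon_forms
    else true) gens) gens) gens.
Proof. by vm_compute. Qed.

Theorem corollary4p2 :
  (forall (i j k : gen) (v : nat), i != j -> j != k -> i != k ->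
     incident v i -> incident v j -> incident v k ->
     word_eq Crel [:: i; j; k; j] [:: j; k; j; i])
  /\
  (forall w1 w2 : seq gen, word_eq Yrel w1 w2 -> word_eq Crel w1 w2).
Proof.
have vertex_commute i j k v : i != j -> j != k -> i != k ->
    incident v i -> incident v j -> incident v k ->
  word_eq Crel [:: i; j; k; j] [:: j; k; j; i].
  move=> Hij Hjk Hik Hi Hj Hk.
  have := allP (allP (allP triples_conjugating_form i (mem_gens i)) j (mem_gens j)) k (mem_gens k).
  rewrite Hij Hjk Hik (common_endP Hi Hj Hk) => /hasP[s Hs].
  exact: conjugating_form_commute.
split=> //; apply: word_eq_sub => _ _ [l r /C_cox/we_rel // | i j k v].
exact: vertex_commute.
Qed.
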